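(* Fix $l,r>0$, $0<\alpha<\beta<1$, diffusion constants $D_1,D_2>0$ (so $\delta=\frac{D_2-D_1}{D_2+D_1}$) and $V\in\mathbb{R}$. Then there exists a unique reversal permanent charge, i.e. a unique $Q_0\in\mathbb{R}$ for which there is $A\in(0,A_M)$ with $G_1(Q_0,A,\delta)=V$ and $G_2(Q_0,A,\delta)=0$, if and only if $|V|<\big|\ln\frac{l}{r}\big|$.
   Context: Setting: steady zero-current Poisson–Nernst–Planck model for two ion species ($n=2$) with valences $z_1=-z_2=1$, dimensionless transmembrane potential $V$, electroneutral boundary concentrations $l$ (left) and $r$ (right), permanent charge $2Q_0$ on $(a,b)$ and $0$ elsewhere on $(0,1)$; $\alpha=H(a)/H(1)$, $\beta=H(b)/H(1)$ with $H(x)=\int_0^x ds/h(s)$, $h>0$ the cross-sectional area. A reversal permanent charge is a permanent charge producing zero total current at potential $V$; in the singular limit this is reduced to the algebraic system $G_1=V$, $G_2=0$ below. For $Q_0\in\mathbb{R}$, $A>0$ define $B=\frac{1-\beta}{\alpha}(l-A)+r$, $A_M=l+\frac{\alpha}{1-\beta}r$, $S_a=\sqrt{Q_0^2+A^2}$, $S_b=\sqrt{Q_0^2+B^2}$, $N=A-l+S_a-S_b$, $G_1(Q_0,A,\delta)=\delta\Big(\ln\frac{S_a+\delta Q_0}{S_b+\delta Q_0}+\ln\frac{l}{r}\Big)-(1+\delta)\ln\frac{A}{B}+\ln\frac{S_a-Q_0}{S_b-Q_0}$, $G_2(Q_0,A,\delta)=\delta Q_0\ln\frac{S_a+\delta Q_0}{S_b+\delta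 Q_0}-N$. *)

From Stdlib Require Import Reals.
Open Scope R_scope.

Definition PNP_B (l r alpha beta A : R) : R := (1 - beta) / alpha * (l - A) + r.
Definition PNP_AM (l r alpha beta : R) : R := l + alpha / (1 - beta) * r.
Definition PNP_Sa (Q0 A : R) : R := sqrt (Q0 ^ 2 + A ^ 2).
Definition PNP_Sb (l r alpha beta Q0 A : R) : R :=
  sqrt (Q0 ^ 2 + (PNP_B l r alpha beta A) ^ 2).
Definition PNP_N (l r alpha beta Q0 A : R) : R :=
  A - l + PNP_Sa Q0 A - PNP_Sb l r alpha beta Q0 A.

Definition PNP_G1 (l r alpha beta Q0 A delta : R) : R :=
  let Sa := PNP_Sa Q0 A in
  let Sb := PNP_Sb l r alpha beta Q0 A in
  let B := PNP_B l r alpha beta A in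
  delta * (ln ((Sa + delta * Q0) / (Sb + delta * Q0)) + ln (l / r))
  - (1 + delta) * ln (A / B)
  + ln ((Sa - Q0) / (Sb - Q0)).

Definition PNP_G2 (l r alpha beta Q0 A delta : R) : R :=
  let Sa := PNP_Sa Q0 A in
  let Sb := PNP_Sb l r alpha beta Q0 A in
  delta * Q0 * ln ((Sa + delta * Q0) / (Sb + delta * Q0))
  - PNP_N l r alpha beta Q0 A.

Definition reversal_charge (l r alpha beta delta V Q0 : R) : Prop :=
  exists A : R, 0 < A /\ A < PNP_AM l r alpha beta /\
    PNP_G1 l r alpha beta Q0 A delta = V /\
    PNP_G2 l r alpha beta Q0 A delta = 0.

From Stdlib Require Import Reals Lra Lia Ranalysis5 ClassicalEpsilon.
From Coquelicot Require Import Coquelicot.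
Open Scope R_scope.

(* For [Q > 0] put [a = Q / Sa] and [b = Q / Sb], so that [A = Q kappa a] and [B = Q kappa b]
   with [kappa t = sqrt (1 - t^2) / t].  Then [G1 = V] and [G2 = 0] become
     [mu a - mu b = V - delta ln (l / r)]  and  [r kappa a + s nu a = l kappa b + s nu b]
   with [s = (1 - beta) l / alpha + r], and [Q] is recovered from [l = Q (kappa a + nu a - nu b)].
   Every solution with [a < b] has [0 < C < (1 - delta) ln (l / r)], where [C = mu a - mu b].
   Conversely, along the curve [mu a - mu b = C] the gap between the two sides of the second
   equation is negative near [a = 0] and, under this bound, positive near [a = 1]; and it only
   crosses zero upwards, since at a zero the ratio [rho = phi' / mu'] strictly drops from [a]
   to [b].  Hence, for [l <> r], a positive reversal charge exists iff [V] lies strictly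
   between [delta ln (l / r)] and [ln (l / r)], and it is then unique.  The symmetry
   [(delta, V, Q) -> (- delta, - V, - Q)] handles [Q < 0], and [Q = 0] works iff
   [V = delta ln (l / r)].  The three ranges tile [|V| < |ln (l / r)|]; when [l = r], every
   [Q] is a reversal charge for [V = 0] and for no other [V]. *)

Lemma continuity_pt_of_ex_derive (f : R -> R) (x : R) : ex_derive f x -> continuity_pt f x.
Proof.
  intros Hf. apply continuity_pt_filterlim.
  now apply (ex_derive_continuous (K := R_AbsRing) (V := R_NormedModule)).
Qed.

Lemma continuity_pt_ball (f : R -> R) (x eps : R) :
  continuity_pt f x -> 0 < eps ->
  exists delta, 0 < delta /\ forall y, Rabs (y - x) < delta -> Rabs (f y - f x) < eps.
Proof.
  intros Hf Heps.
  destruct (proj1 (continuity_pt_locally f x) Hf (mkposreal eps Heps)) as [delta Hdelta].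
  exists delta. split; [apply cond_pos |]. intros y Hy. now apply Hdelta.
Qed.

Lemma decreasing_of_derive_neg (f f' : R -> R) (x y : R) :
  x < y -> (forall c, x <= c <= y -> is_derive f c (f' c)) ->
  (forall c, x < c < y -> f' c < 0) -> f y < f x.
Proof.
  intros Hxy Hf Hneg.
  destruct (MVT_cor2 f f' x y Hxy) as [c [Hc Hcxy]].
  - intros c Hc. now apply is_derive_Reals, Hf.
  - specialize (Hneg c Hcxy). nra.
Qed.

Lemma sub_lt_sub_of_derive_lt (f g f' g' : R -> R) (x y : R) :
  x < y -> (forall c, x <= c <= y -> is_derive f c (f' c)) ->
  (forall c, x <= c <= y -> is_derive g c (g' c)) ->
  (forall c, x < c < y -> f' c < g' c) -> f y - f x < g y - g x.
Proof.
  intros Hxy Hf Hg Hlt.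
  enough (f y - g y < f x - g x) by lra.
  apply (decreasing_of_derive_neg (fun t => f t - g t) (fun c => f' c - g' c) x y Hxy).
  - intros c Hc. apply (is_derive_minus f g c); auto.
  - intros c Hc. specialize (Hlt c Hc). lra.
Qed.

(* A Cauchy mean value inequality, [rho] playing the role of [f' / g']. *)
Lemma sub_lt_of_derive_ratio_lt (f g rho g' : R -> R) (lam x y : R) :
  x < y -> (forall c, x <= c <= y -> is_derive f c (rho c * g' c)) ->
  (forall c, x <= c <= y -> is_derive g c (g' c)) ->
  (forall c, x < c < y -> g' c < 0 /\ rho c < lam) ->
  f x - f y < lam * (g x - g y).
Proof.
  intros Hxy Hf Hg Hratio.
  enough (lam * g y - lam * g x < f y - f x) by lra.
  apply (sub_lt_sub_of_derive_lt (fun t => lam * g t) f (fun c => lam * g' c) (fun c => rho c * g' c)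
           x y Hxy); auto.
  - intros c Hc. now apply is_derive_scal, Hg.
  - intros c Hc. destruct (Hratio c Hc). nra.
Qed.

Lemma sub_gt_of_derive_ratio_gt (f g rho g' : R -> R) (lam x y : R) :
  x < y -> (forall c, x <= c <= y -> is_derive f c (rho c * g' c)) ->
  (forall c, x <= c <= y -> is_derive g c (g' c)) ->
  (forall c, x < c < y -> g' c < 0 /\ lam < rho c) ->
  lam * (g x - g y) < f x - f y.
Proof.
  intros Hxy Hf Hg Hratio.
  enough (f y - f x < lam * g y - lam * g x) by lra.
  apply (sub_lt_sub_of_derive_lt f (fun t => lam * g t) (fun c => rho c * g' c) (fun c => lam * g' c)
           x y Hxy); auto.
  - intros c Hc. now apply is_derive_scal, Hg.
  - intros c Hc. destruct (Hratio c Hc). nra.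
Qed.

Lemma exists_root_between (f : R -> R) (a b x y : R) :
  a < x < b -> a < y < b -> (forall t, a < t < b -> continuity_pt f t) ->
  f x < 0 -> 0 < f y -> exists z, a < z < b /\ f z = 0.
Proof.
  intros Hx Hy Hf Hfx Hfy.
  destruct (Rtotal_order x y) as [Hxy | [-> | Hyx]]; [| lra |].
  - destruct (IVT_interv f x y) as [z [Hz Hfz]]; [intros t Ht; apply Hf; lra | lra | lra | lra |].
    exists z. split; [lra | exact Hfz].
  - destruct (IVT_interv (fun t => - f t) y x) as [z [Hz Hfz]];
      [intros t Ht; apply continuity_pt_opp, Hf; lra | lra | lra | lra |].
    exists z. split; [lra | lra].
Qed.

Lemma continuity_pt_separate (f g : R -> R) (z : R) :
  continuity_pt f z -> continuity_pt g z -> g z < f z ->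
  exists eps lam, 0 < eps /\ forall x, Rabs (x - z) < eps -> g x < lam < f x.
Proof.
  intros Hf Hg Hlt. set (h := (f z - g z) / 2).
  destruct (continuity_pt_ball f z h Hf ltac:(unfold h; lra)) as [ef [Hef Hballf]].
  destruct (continuity_pt_ball g z h Hg ltac:(unfold h; lra)) as [eg [Heg Hballg]].
  exists (Rmin ef eg), ((f z + g z) / 2). split; [now apply Rmin_glb_lt |].
  intros x Hx.
  assert (Hfx : Rabs (f x - f z) < h) by (apply Hballf; eapply Rlt_le_trans; [exact Hx | apply Rmin_l]).
  assert (Hgx : Rabs (g x - g z) < h) by (apply Hballg; eapply Rlt_le_trans; [exact Hx | apply Rmin_r]).
  apply Rabs_def2 in Hfx, Hgx. unfold h in *. lra.
Qed.

Lemma exists_zero_right_nonpositive (G : R -> R) (a b : R) :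
  a < b -> (forall x, a <= x <= b -> continuity_pt G x) -> 0 < G a -> G b < 0 ->
  exists z, a < z < b /\ G z = 0 /\ forall delta, 0 < delta -> ~ (forall x, z < x < z + delta -> 0 < G x).
Proof.
  intros Hab Hcont Ga Gb.
  set (S := fun x => a <= x <= b /\ 0 < G x).
  destruct (completeness S) as [z [Hub Hlub]].
  { exists b. intros x Hx. apply Hx. }
  { exists a. split; lra. }
  assert (Hz : a <= z <= b).
  { split; [apply Hub; split; lra |]. apply Hlub. intros x Hx. apply Hx. }
  assert (Hright : forall delta, 0 < delta -> z < b -> ~ (forall x, z < x < z + delta -> 0 < G x)).
  { intros delta Hdelta Hzb Hpos.
    set (x := Rmin b (z + delta / 2)).
    assert (Hx : z < x <= b) by (unfold x; split; [apply Rmin_glb_lt | apply Rmin_l]; lra).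
    assert (x <= z); [| lra].
    apply Hub. split; [lra |]. apply Hpos. split; [lra |].
    unfold x. pose proof (Rmin_r b (z + delta / 2)). lra. }
  assert (Gz : G z = 0).
  { destruct (Rtotal_order (G z) 0) as [Hneg | [Hzero | Hpos]]; [exfalso | exact Hzero | exfalso].
    - destruct (continuity_pt_ball G z (- G z) (Hcont z Hz) ltac:(lra)) as [delta [Hd Hball]].
      assert (Hza : a < z) by (destruct (Req_dec z a) as [E | E]; [rewrite E in Hneg; lra | lra]).
      assert (z <= z - delta); [| lra].
      apply Hlub. intros x [Hx Gx]. destruct (Rle_lt_dec x (z - delta)) as [Hle | Hlt]; [exact Hle | exfalso].
      assert (x <= z) by (apply Hub; now split).
      assert (Hgx : Rabs (G x - G z) < - G z) by (apply Hball, Rabs_def1; lra).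
      apply Rabs_def2 in Hgx. lra.
    - destruct (continuity_pt_ball G z (G z) (Hcont z Hz) Hpos) as [delta [Hd Hball]].
      apply (Hright delta Hd).
      + destruct (Req_dec z b) as [E | E]; [rewrite E in Hpos; lra | lra].
      + intros x Hx. assert (Hgx : Rabs (G x - G z) < G z) by (apply Hball, Rabs_def1; lra).
        apply Rabs_def2 in Hgx. lra. }
  assert (Hzab : a < z < b).
  { split; [destruct (Req_dec z a) as [E | E] | destruct (Req_dec z b) as [E | E]];
      solve [rewrite E in Gz; lra | lra]. }
  exists z. split; [exact Hzab |]. split; [exact Gz |].
  intros delta Hdelta. apply Hright; lra.
Qed.

Lemma no_two_upcrossing_zeros (G : R -> R) (a b : R) :
  a < b -> (forall x, a <= x <= b -> continuity_pt G x) ->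
  (forall z, a <= z <= b -> G z = 0 -> exists eps, 0 < eps /\
     forall x, Rabs (x - z) < eps -> x <> z -> 0 < (x - z) * G x) ->
  G a = 0 -> G b = 0 -> False.
Proof.
  intros Hab Hcont Hup Ga Gb.
  destruct (Hup a ltac:(lra) Ga) as [ea [Hea Hsa]].
  set (a0 := a + Rmin ea (b - a) / 2).
  assert (Ha0 : a < a0 < b /\ a0 - a < ea).
  { assert (0 < Rmin ea (b - a)) by (apply Rmin_glb_lt; lra).
    unfold a0. pose proof (Rmin_l ea (b - a)). pose proof (Rmin_r ea (b - a)). lra. }
  assert (Ga0 : 0 < G a0).
  { assert (0 < (a0 - a) * G a0); [apply Hsa; [apply Rabs_def1 |]; lra | nra]. }
  destruct (Hup b ltac:(lra) Gb) as [eb [Heb Hsb]].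
  set (b0 := b - Rmin eb (b - a0) / 2).
  assert (Hb0 : a0 < b0 < b /\ b - b0 < eb).
  { assert (0 < Rmin eb (b - a0)) by (apply Rmin_glb_lt; lra).
    unfold b0. pose proof (Rmin_l eb (b - a0)). pose proof (Rmin_r eb (b - a0)). lra. }
  assert (Gb0 : G b0 < 0).
  { assert (0 < (b0 - b) * G b0); [apply Hsb; [apply Rabs_def1 |]; lra | nra]. }
  destruct (exists_zero_right_nonpositive G a0 b0) as (z & Hz & Gz & Hright); try lra.
  { intros x Hx. apply Hcont. lra. }
  destruct (Hup z ltac:(lra) Gz) as [ez [Hez Hsz]].
  apply (Hright ez Hez). intros x Hx.
  assert (0 < (x - z) * G x) by (apply Hsz; [apply Rabs_def1 |]; lra). nra.
Qed.

(** * The reduced problem *)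

Definition kappa (t : R) : R := sqrt (1 - t ^ 2) / t.

Lemma kappa_pos (t : R) : 0 < t < 1 -> 0 < kappa t.
Proof. intros Ht. apply Rdiv_lt_0_compat; [apply sqrt_lt_R0 |]; nra. Qed.

Lemma kappa_sq (t : R) : 0 < t < 1 -> kappa t ^ 2 = 1 / t ^ 2 - 1.
Proof.
  intros Ht. unfold kappa, Rdiv. rewrite Rpow_mult_distr, pow2_sqrt by nra. field. lra.
Qed.

Lemma kappa_decreasing (x y : R) : 0 < x -> x < y -> y < 1 -> kappa y < kappa x.
Proof.
  intros Hx Hxy Hy. unfold kappa.
  assert (Hsy : 0 < sqrt (1 - y ^ 2)) by (apply sqrt_lt_R0; nra).
  assert (Hs : sqrt (1 - y ^ 2) < sqrt (1 - x ^ 2)) by (apply sqrt_lt_1; nra).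
  apply (Rmult_lt_reg_r (x * y)); [nra |].
  field_simplify; [| lra | lra]. nra.
Qed.

Lemma inv_succ_bounds (m : R) : 0 < m -> 0 < / (1 + m) < 1.
Proof.
  intros Hm. split; [apply Rinv_0_lt_compat; lra |].
  rewrite <- Rinv_1. apply Rinv_lt_contravar; lra.
Qed.

Lemma kappa_inv_succ_sq (m : R) : 0 < m -> kappa (/ (1 + m)) ^ 2 = m * (2 + m).
Proof.
  intros Hm. pose proof (inv_succ_bounds m Hm).
  rewrite kappa_sq by lra. field. lra.
Qed.

Lemma exists_kappa_le_near_one (g k : R) : 0 < g -> 0 < k ->
  exists u, 0 < u < 1 /\ 1 / u <= 1 + g /\ kappa u <= k.
Proof.
  intros Hg Hk.
  set (m := Rmin g (Rmin 1 (k ^ 2 / 3))).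
  assert (Hm : 0 < m) by (unfold m; repeat apply Rmin_glb_lt; nra).
  assert (Hmg : m <= g) by apply Rmin_l.
  assert (Hm1 : m <= 1) by (eapply Rle_trans; [apply Rmin_r | apply Rmin_l]).
  assert (Hmk : m <= k ^ 2 / 3) by (eapply Rle_trans; [apply Rmin_r | apply Rmin_r]).
  pose proof (inv_succ_bounds m Hm) as Hu.
  exists (/ (1 + m)). split; [exact Hu |]. split.
  - replace (1 / / (1 + m)) with (1 + m) by (field; lra). lra.
  - pose proof (kappa_inv_succ_sq m Hm). pose proof (kappa_pos (/ (1 + m)) Hu). nra.
Qed.

Lemma ln_kappa (t : R) : 0 < t < 1 -> ln (kappa t) = (ln (1 - t) + ln (1 + t)) / 2 - ln t.
Proof.
  intros Ht. unfold kappa.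
  rewrite ln_div by (try apply sqrt_lt_R0; nra).
  replace (1 - t ^ 2) with ((1 - t) * (1 + t)) by ring.
  rewrite <- Rpower_sqrt, ln_Rpower, ln_mult by nra. lra.
Qed.

Lemma is_derive_kappa (t : R) : 0 < t < 1 -> is_derive kappa t (- 1 / (t ^ 2 * sqrt (1 - t ^ 2))).
Proof.
  intros Ht. unfold kappa.
  assert (Hs : 0 < sqrt (1 - t ^ 2)) by (apply sqrt_lt_R0; nra).
  auto_derive; [nra |].
  replace (1 + - (t * (t * 1))) with (1 - t ^ 2) by ring.
  set (s := sqrt (1 - t ^ 2)) in *.
  assert (Hss : s ^ 2 = 1 - t ^ 2) by (unfold s; apply pow2_sqrt; nra).
  assert (0 < t ^ 2 * s) by (apply Rmult_lt_0_compat; [apply pow_lt |]; lra).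
  apply (Rmult_eq_reg_r (t ^ 2 * s)); [| lra].
  field_simplify; [| lra | lra]. rewrite Hss. field.
Qed.

Section Profiles.

Variable d : R.
Hypothesis Hd : -1 < d < 1.

Definition nu (t : R) : R := 1 / t - d * ln ((1 + d * t) / t).

Definition mu (t : R) : R :=
  d * ln (1 + d * t) + (1 - d) / 2 * ln (1 - t) - (1 + d) / 2 * ln (1 + t).

Definition dmu (t : R) : R := - (1 - d ^ 2) / ((1 + d * t) * (1 - t ^ 2)).

Definition phi (al be t : R) : R := al * kappa t + be * nu t.

(* [rho al be] is the ratio [phi' / mu'] of derivatives, see [is_derive_phi]. *)
Definition rho (al be t : R) : R :=
  (al * kappa t * (1 / t + d) + be * kappa t ^ 2) / (1 - d ^ 2).

Lemma mu_0 : mu 0 = 0.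
Proof. unfold mu. rewrite Rmult_0_r, Rplus_0_r, Rminus_0_r, ln_1. ring. Qed.

Lemma is_derive_mu (t : R) : -1 < t < 1 -> is_derive mu t (dmu t).
Proof.
  intros Ht. unfold mu, dmu. assert (0 < 1 + d * t) by nra.
  auto_derive; [repeat split; lra |]. field. repeat split; nra.
Qed.

Lemma dmu_neg (t : R) : -1 < t < 1 -> dmu t < 0.
Proof.
  intros Ht. unfold dmu, Rdiv. rewrite Ropp_mult_distr_l_reverse.
  apply Ropp_lt_gt_0_contravar, Rmult_lt_0_compat; [nra |].
  apply Rinv_0_lt_compat, Rmult_lt_0_compat; nra.
Qed.

Lemma mu_decreasing (x y : R) : -1 < x -> x < y -> y < 1 -> mu y < mu x.
Proof.
  intros Hx Hxy Hy. apply (decreasing_of_derive_neg mu dmu x y Hxy).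
  - intros c Hc. apply is_derive_mu. lra.
  - intros c Hc. apply dmu_neg. lra.
Qed.

Lemma is_derive_nu (t : R) : 0 < t < 1 -> is_derive nu t (- 1 / (t ^ 2 * (1 + d * t))).
Proof.
  intros Ht. unfold nu. assert (0 < 1 + d * t) by nra.
  auto_derive; [repeat split; try apply Rdiv_lt_0_compat; lra |]. field. lra.
Qed.

Lemma nu_decreasing (x y : R) : 0 < x -> x < y -> y < 1 -> nu y < nu x.
Proof.
  intros Hx Hxy Hy. apply (decreasing_of_derive_neg nu (fun t => - 1 / (t ^ 2 * (1 + d * t))) x y Hxy).
  - intros c Hc. apply is_derive_nu. lra.
  - intros c Hc. apply Rdiv_neg_pos; [lra |]. apply Rmult_lt_0_compat; nra.
Qed.

Lemma is_derive_phi (al be t : R) : 0 < t < 1 -> is_derive (phi al be) t (rho al be t * dmu t).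
Proof.
  intros Ht.
  assert (0 < 1 + d * t) by nra.
  assert (Hs : 0 < sqrt (1 - t ^ 2)) by (apply sqrt_lt_R0; nra).
  replace (rho al be t * dmu t)
    with (al * (- 1 / (t ^ 2 * sqrt (1 - t ^ 2))) + be * (- 1 / (t ^ 2 * (1 + d * t)))).
  - apply (is_derive_plus (fun t => al * kappa t) (fun t => be * nu t));
      apply is_derive_scal; [apply is_derive_kappa | apply is_derive_nu]; lra.
  - unfold rho, dmu, kappa. set (s := sqrt (1 - t ^ 2)) in *.
    replace (1 - t ^ 2) with (s * s) by (unfold s; apply sqrt_sqrt; nra).
    field. repeat split; nra.
Qed.

Lemma is_derive_ln_kappa (t : R) :
  0 < t < 1 -> is_derive (fun t => ln (kappa t)) t ((1 / t + d) / (1 - d ^ 2) * dmu t).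
Proof.
  intros Ht.
  assert (0 < 1 + d * t) by nra.
  assert (Hs : 0 < sqrt (1 - t ^ 2)) by (apply sqrt_lt_R0; nra).
  replace ((1 / t + d) / (1 - d ^ 2) * dmu t) with (- 1 / (t ^ 2 * sqrt (1 - t ^ 2)) * / kappa t).
  - apply (is_derive_comp ln kappa); [apply is_derive_ln, kappa_pos | apply is_derive_kappa]; lra.
  - unfold dmu, kappa.
    set (s := sqrt (1 - t ^ 2)) in *.
    replace (1 - t ^ 2) with (s * s) by (unfold s; apply sqrt_sqrt; nra).
    field. repeat split; nra.
Qed.

Lemma rho_decreasing (al be x y : R) :
  0 <= al -> 0 < be -> 0 < x -> x < y -> y < 1 -> rho al be y < rho al be x.
Proof.
  intros Hal Hbe Hx Hxy Hy. unfold rho, Rdiv. apply Rmult_lt_compat_r; [apply Rinv_0_lt_compat; nra |].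
  pose proof (kappa_decreasing x y Hx Hxy Hy). pose proof (kappa_pos y (conj (Rlt_trans _ _ _ Hx Hxy) Hy)).
  assert (1 / y < 1 / x) by (apply Rmult_lt_reg_r with (x * y); [nra |]; field_simplify; nra).
  assert (1 < 1 / y) by (apply Rmult_lt_reg_r with y; [lra |]; field_simplify; lra).
  assert (kappa y * (1 / y + d) <= kappa x * (1 / x + d)) by (apply Rmult_le_compat; lra).
  assert (al * (kappa y * (1 / y + d)) <= al * (kappa x * (1 / x + d))) by (apply Rmult_le_compat_l; lra).
  assert (be * kappa y ^ 2 < be * kappa x ^ 2) by (apply Rmult_lt_compat_l; nra).
  lra.
Qed.

Lemma phi_sub_gt (al be lam x y : R) : 0 <= al -> 0 < be -> 0 < x -> x < y -> y < 1 ->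
  lam <= rho al be y -> lam * (mu x - mu y) < phi al be x - phi al be y.
Proof.
  intros Hal Hbe Hx Hxy Hy Hlam.
  apply (sub_gt_of_derive_ratio_gt (phi al be) mu (rho al be) dmu lam x y Hxy).
  - intros c Hc. apply is_derive_phi. lra.
  - intros c Hc. apply is_derive_mu. lra.
  - intros c Hc. split; [apply dmu_neg; lra |].
    pose proof (rho_decreasing al be c y Hal Hbe ltac:(lra) ltac:(lra) Hy). lra.
Qed.

Lemma phi_sub_lt (al be lam x y : R) : 0 <= al -> 0 < be -> 0 < x -> x < y -> y < 1 ->
  rho al be x <= lam -> phi al be x - phi al be y < lam * (mu x - mu y).
Proof.
  intros Hal Hbe Hx Hxy Hy Hlam.
  apply (sub_lt_of_derive_ratio_lt (phi al be) mu (rho al be) dmu lam x y Hxy).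
  - intros c Hc. apply is_derive_phi. lra.
  - intros c Hc. apply is_derive_mu. lra.
  - intros c Hc. split; [apply dmu_neg; lra |].
    pose proof (rho_decreasing al be x c Hal Hbe Hx ltac:(lra) ltac:(lra)). lra.
Qed.

Lemma mu_sub_lt_ln_kappa_sub (x y : R) : 0 < x -> x < y -> y < 1 ->
  mu x - mu y < (1 - d) * (ln (kappa x) - ln (kappa y)).
Proof.
  intros Hx Hxy Hy.
  assert (1 / (1 - d) * (mu x - mu y) < ln (kappa x) - ln (kappa y)).
  { apply (sub_gt_of_derive_ratio_gt (fun t => ln (kappa t)) mu (fun c => (1 / c + d) / (1 - d ^ 2))
             dmu _ x y Hxy).
    - intros c Hc. apply is_derive_ln_kappa. lra.
    - intros c Hc. apply is_derive_mu. lra.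
    - intros c Hc. split; [apply dmu_neg; lra |].
      assert (1 < 1 / c) by (apply Rmult_lt_reg_r with c; [lra |]; field_simplify; lra).
      apply Rmult_lt_reg_r with (1 - d ^ 2); [nra |].
      replace ((1 / c + d) / (1 - d ^ 2) * (1 - d ^ 2)) with (1 / c + d) by (field; nra).
      replace (1 / (1 - d) * (1 - d ^ 2)) with (1 + d) by (field; lra). lra. }
  apply Rmult_lt_reg_l with (1 / (1 - d)); [apply Rdiv_lt_0_compat; lra |].
  replace (1 / (1 - d) * ((1 - d) * (ln (kappa x) - ln (kappa y))))
    with (ln (kappa x) - ln (kappa y)) by (field; lra).
  lra.
Qed.

Lemma ln_kappa_sub_lt (lam x y : R) : 0 < x -> x < y -> y < 1 ->
  1 / x + d <= lam * (1 - d ^ 2) -> ln (kappa x) - ln (kappa y) < lam * (mu x - mu y).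
Proof.
  intros Hx Hxy Hy Hlam.
  apply (sub_lt_of_derive_ratio_lt (fun t => ln (kappa t)) mu (fun c => (1 / c + d) / (1 - d ^ 2))
           dmu lam x y Hxy).
  - intros c Hc. apply is_derive_ln_kappa. lra.
  - intros c Hc. apply is_derive_mu. lra.
  - intros c Hc. split; [apply dmu_neg; lra |].
    assert (1 / c < 1 / x) by (apply Rmult_lt_reg_r with (x * c); [nra |]; field_simplify; nra).
    apply Rmult_lt_reg_r with (1 - d ^ 2); [nra |].
    replace ((1 / c + d) / (1 - d ^ 2) * (1 - d ^ 2)) with (1 / c + d) by (field; nra). lra.
Qed.

Lemma nu_sub_lt (x y : R) : 0 < x -> x < y -> y < 1 ->
  nu x - nu y < y / (1 + d * y) * (1 / x ^ 2 - 1 / y ^ 2).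
Proof.
  intros Hx Hxy Hy.
  apply (sub_lt_of_derive_ratio_lt nu (fun t => 1 / t ^ 2) (fun c => c / (2 * (1 + d * c)))
           (fun c => - 2 / c ^ 3) _ x y Hxy).
  - intros c Hc. assert (0 < 1 + d * c) by nra.
    replace (c / (2 * (1 + d * c)) * (- 2 / c ^ 3)) with (- 1 / (c ^ 2 * (1 + d * c))) by (field; lra).
    apply is_derive_nu. lra.
  - intros c Hc. auto_derive; [intro; nra |]. field. lra.
  - intros c Hc. assert (0 < 1 + d * c) by nra. assert (0 < 1 + d * y) by nra.
    split; [apply Rdiv_neg_pos; [lra | apply pow_lt; lra] |].
    apply Rmult_lt_reg_r with (2 * (1 + d * c) * (1 + d * y)); [nra |].
    field_simplify; nra.
Qed.

Lemma rho_drop (al1 al2 be u v : R) : 0 <= al1 -> 0 < be -> 0 < u -> u < v -> v < 1 ->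
  phi al1 be u = phi al2 be v -> rho al2 be v < rho al1 be u.
Proof.
  intros Hal Hbe Hu Huv Hv Heq. unfold rho, Rdiv. apply Rmult_lt_compat_r; [apply Rinv_0_lt_compat; nra |].
  unfold phi in Heq.
  assert (Hal2 : al2 * kappa v = al1 * kappa u + be * (nu u - nu v)) by lra.
  replace (al2 * kappa v * (1 / v + d)) with ((al1 * kappa u + be * (nu u - nu v)) * (1 / v + d))
    by (rewrite <- Hal2; ring).
  rewrite !kappa_sq by lra.
  assert (0 < 1 + d * v) by nra.
  assert (1 / v < 1 / u) by (apply Rmult_lt_reg_r with (u * v); [nra |]; field_simplify; nra).
  assert (1 < 1 / v) by (apply Rmult_lt_reg_r with v; [lra |]; field_simplify; lra).
  assert (Hpos : 0 < 1 / v + d) by lra.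
  assert ((nu u - nu v) * (1 / v + d) < 1 / u ^ 2 - 1 / v ^ 2).
  { replace (1 / u ^ 2 - 1 / v ^ 2) with (v / (1 + d * v) * (1 / u ^ 2 - 1 / v ^ 2) * (1 / v + d))
      by (field; repeat split; lra).
    apply Rmult_lt_compat_r; [exact Hpos |]. now apply nu_sub_lt. }
  pose proof (kappa_pos u (conj Hu (Rlt_trans _ _ _ Huv Hv))).
  assert (0 <= al1 * kappa u * (1 / u - 1 / v)) by (apply Rmult_le_pos; [apply Rmult_le_pos |]; lra).
  nra.
Qed.

Lemma mu_lt_iff (x y : R) : -1 < x < 1 -> -1 < y < 1 -> mu x < mu y <-> y < x.
Proof.
  intros Hx Hy. split; intros H.
  - destruct (Rtotal_order y x) as [Hlt | [Heq | Hgt]]; [exact Hlt | subst; lra |].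
    pose proof (mu_decreasing x y ltac:(lra) Hgt ltac:(lra)). lra.
  - apply mu_decreasing; lra.
Qed.

Lemma mu_le (t : R) : 0 <= t < 1 -> mu t <= ln 2 - ln (1 - Rabs d) + (1 - d) / 2 * ln (1 - t).
Proof.
  intros Ht. unfold mu.
  assert (0 <= (1 + d) / 2 * ln (1 + t)).
  { apply Rmult_le_pos; [lra |]. rewrite <- ln_1. apply ln_le; lra. }
  assert (0 <= ln 2) by (rewrite <- ln_1; apply ln_le; lra).
  enough (d * ln (1 + d * t) <= ln 2 - ln (1 - Rabs d)) by lra.
  destruct (Rle_lt_dec 0 d) as [Hd0 | Hd0].
  - rewrite Rabs_right in * by lra.
    assert (0 <= ln (1 + d * t)) by (rewrite <- ln_1; apply ln_le; nra).
    assert (ln (1 + d * t) <= ln 2) by (apply ln_le; nra).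
    assert (ln (1 - d) <= 0) by (rewrite <- ln_1; apply ln_le; lra).
    nra.
  - rewrite Rabs_left in * by lra. replace (1 - - d) with (1 + d) by ring.
    assert (ln (1 + d) <= ln (1 + d * t)) by (apply ln_le; nra).
    assert (ln (1 + d) <= 0) by (rewrite <- ln_1; apply ln_le; lra).
    nra.
Qed.

Lemma mu_unbounded_below (X : R) : exists t, 0 < t < 1 /\ mu t < X.
Proof.
  set (M := ln 2 - ln (1 - Rabs d)).
  set (Y := Rmin (-1) (2 * (X - M) / (1 - d) - 1)).
  assert (HY1 : Y <= -1) by apply Rmin_l.
  assert (HY2 : Y <= 2 * (X - M) / (1 - d) - 1) by apply Rmin_r.
  assert (Hexp : 0 < exp Y < 1) by (split; [apply exp_pos | rewrite <- exp_0; apply exp_increasing; lra]).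
  exists (1 - exp Y). split; [lra |].
  pose proof (mu_le (1 - exp Y) ltac:(lra)) as Hle.
  replace (1 - (1 - exp Y)) with (exp Y) in Hle by ring. rewrite ln_exp in Hle.
  assert ((1 - d) / 2 * Y < X - M); [| fold M in Hle; lra].
  apply Rmult_lt_reg_l with (2 / (1 - d)); [apply Rdiv_lt_0_compat; lra |].
  replace (2 / (1 - d) * ((1 - d) / 2 * Y)) with Y by (field; lra).
  replace (2 / (1 - d) * (X - M)) with (2 * (X - M) / (1 - d)) by (field; lra). lra.
Qed.

(* [mu] maps [0, 1) onto [(-oo, 0]]; for [c > 0] the value of [mu_inv c] is unspecified. *)
Definition mu_inv (c : R) : R := epsilon (inhabits 0) (fun v => 0 <= v < 1 /\ mu v = c).

Lemma mu_inv_spec (c : R) : c <= 0 -> 0 <= mu_inv c < 1 /\ mu (mu_inv c) = c.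
Proof.
  intros Hc. unfold mu_inv. apply epsilon_spec.
  destruct Hc as [Hc | ->]; [| exists 0; split; [lra | apply mu_0]].
  destruct (mu_unbounded_below c) as [t [Ht Hmut]].
  destruct (IVT_interv (fun s => c - mu s) 0 t) as [v [Hv Hmuv]].
  - intros s Hs. apply continuity_pt_minus; [apply continuity_pt_const; now intros ? ? |].
    apply continuity_pt_of_ex_derive. eexists. apply is_derive_mu. lra.
  - lra.
  - rewrite mu_0. lra.
  - lra.
  - exists v. split; [| lra]. split; [lra |].
    destruct (Req_dec v t) as [-> | ]; lra.
Qed.

Lemma mu_inv_mu (v : R) : 0 <= v < 1 -> mu_inv (mu v) = v.
Proof.
  intros Hv.
  assert (Hmu : mu v <= 0).
  { rewrite <- mu_0. destruct (proj1 Hv) as [H | <-]; [left; apply mu_decreasing |]; lra. }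
  destruct (mu_inv_spec (mu v) Hmu) as [Hw Hmuw].
  destruct (Rtotal_order (mu_inv (mu v)) v) as [Hlt | [Heq | Hgt]]; [exfalso | exact Heq | exfalso].
  - pose proof (mu_decreasing (mu_inv (mu v)) v ltac:(lra) Hlt ltac:(lra)). lra.
  - pose proof (mu_decreasing v (mu_inv (mu v)) ltac:(lra) Hgt ltac:(lra)). lra.
Qed.

Lemma continuity_mu_inv (c : R) : c < 0 -> continuity_pt mu_inv c.
Proof.
  intros Hc.
  destruct (mu_unbounded_below c) as [t [Ht Hmut]].
  (* [continuity_pt_recip_interv] is stated for increasing functions, hence [- mu]. *)
  assert (Hinv : continuity_pt (fun x => mu_inv (- x)) (- c)).
  { apply (continuity_pt_recip_interv (fun v => - mu v) _ 0 t); [lra | | | | | ].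
    - intros x y Hx Hxy Hy. pose proof (mu_decreasing x y ltac:(lra) Hxy ltac:(lra)). lra.
    - intros x Hx Hxt. rewrite mu_0 in Hx. unfold comp, id.
      rewrite (proj2 (mu_inv_spec (- x) ltac:(lra))). ring.
    - intros x Hx Hxt. rewrite mu_0 in Hx.
      destruct (mu_inv_spec (- x) ltac:(lra)) as [Hw Hmuw]. split; [lra |].
      destruct (Rle_lt_dec (mu_inv (- x)) t) as [Hle | Hlt]; [exact Hle | exfalso].
      pose proof (mu_decreasing t (mu_inv (- x)) ltac:(lra) Hlt ltac:(lra)). lra.
    - intros a Ha. apply continuity_pt_opp.
      apply continuity_pt_of_ex_derive. eexists. apply is_derive_mu. lra.
    - rewrite mu_0. lra. }
  assert (Hopp : continuity_pt (fun x => - x) c).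
  { apply continuity_pt_of_ex_derive. auto_derive. exact I. }
  pose proof (continuity_pt_comp _ _ c Hopp Hinv) as Hcomp.
  apply (continuity_pt_ext _ _ _ (fun x => f_equal mu_inv (Ropp_involutive x)) Hcomp).
Qed.

Lemma continuity_rho (al be t : R) : 0 < t < 1 -> continuity_pt (rho al be) t.
Proof.
  intros Ht. apply continuity_pt_of_ex_derive. unfold rho, kappa.
  auto_derive. repeat split; try lra; nra.
Qed.

Lemma continuity_phi (al be t : R) : 0 < t < 1 -> continuity_pt (phi al be) t.
Proof. intros Ht. apply continuity_pt_of_ex_derive. eexists. now apply is_derive_phi. Qed.

Lemma nu_sub_lt_kappa_sq (x y : R) : 0 < x -> x < y -> y < 1 ->
  nu x - nu y < kappa x ^ 2 / (1 - d ^ 2) * (mu x - mu y).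
Proof.
  intros Hx Hxy Hy.
  replace (kappa x ^ 2 / (1 - d ^ 2)) with (rho 0 1 x) by (unfold rho; field; nra).
  replace (nu x - nu y) with (phi 0 1 x - phi 0 1 y) by (unfold phi; ring).
  apply phi_sub_lt; lra.
Qed.

Definition level_pair (al1 al2 be C a b : R) : Prop :=
  0 < a < 1 /\ 0 < b < 1 /\ mu a - mu b = C /\ phi al1 be a = phi al2 be b.

Lemma level_pair_swap (al1 al2 be C a b : R) :
  level_pair al1 al2 be C a b -> level_pair al2 al1 be (- C) b a.
Proof. intros (Ha & Hb & HC & Hphi). repeat split; lra. Qed.

Lemma level_pair_same (al1 al2 be C a : R) :
  level_pair al1 al2 be C a a -> al1 = al2 /\ C = 0.
Proof.
  intros (Ha & _ & HC & Hphi). unfold phi in Hphi. pose proof (kappa_pos a Ha).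
  split; [apply Rmult_eq_reg_r with (kappa a); lra | lra].
Qed.

Lemma level_pair_lt (al1 al2 be C a b : R) : 0 < al1 -> 0 < be -> a < b ->
  level_pair al1 al2 be C a b -> 0 < C < (1 - d) * ln (al2 / al1).
Proof.
  intros Hal1 Hbe Hab (Ha & Hb & HC & Hphi). unfold phi in Hphi.
  pose proof (kappa_pos a Ha). pose proof (kappa_pos b Hb).
  pose proof (kappa_decreasing a b ltac:(lra) Hab ltac:(lra)).
  pose proof (nu_decreasing a b ltac:(lra) Hab ltac:(lra)).
  assert (Hk : al1 * kappa a < al2 * kappa b) by nra.
  assert (ln (kappa a) - ln (kappa b) < ln (al2 / al1)).
  { rewrite <- ln_div by lra. apply ln_increasing; [apply Rdiv_lt_0_compat; lra |].
    apply Rmult_lt_reg_r with (al1 * kappa b); [nra |]. field_simplify; nra. }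
  pose proof (mu_decreasing a b ltac:(lra) Hab ltac:(lra)).
  pose proof (mu_sub_lt_ln_kappa_sub a b ltac:(lra) Hab ltac:(lra)).
  split; nra.
Qed.

Section LevelGap.

Variables al1 al2 be C : R.
Hypotheses (Hal1 : 0 < al1) (Hal2 : 0 < al2) (Hbe : 0 < be) (HC : 0 < C).

Definition level_shift (u : R) : R := mu_inv (mu u - C).

Definition level_gap (u : R) : R := phi al2 be (level_shift u) - phi al1 be u.

Lemma level_shift_spec (u : R) :
  0 < u < 1 -> u < level_shift u < 1 /\ mu (level_shift u) = mu u - C.
Proof.
  intros Hu. assert (mu u < 0) by (rewrite <- mu_0; apply mu_decreasing; lra).
  destruct (mu_inv_spec (mu u - C) ltac:(lra)) as [Hv Hmuv].
  unfold level_shift. split; [| exact Hmuv]. split; [| lra].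
  apply (mu_lt_iff (mu_inv (mu u - C)) u); lra.
Qed.

Lemma level_shift_of_level (u v : R) : 0 < u < 1 -> 0 < v < 1 -> mu u - mu v = C -> level_shift u = v.
Proof.
  intros Hu Hv Hmu. unfold level_shift. replace (mu u - C) with (mu v) by lra.
  apply mu_inv_mu. lra.
Qed.

Lemma continuity_level_shift (u : R) : 0 < u < 1 -> continuity_pt level_shift u.
Proof.
  intros Hu. assert (mu u < 0) by (rewrite <- mu_0; apply mu_decreasing; lra).
  apply (continuity_pt_comp (fun t => mu t - C) mu_inv).
  - apply continuity_pt_of_ex_derive. eexists.
    apply (is_derive_minus mu (fun _ => C)); [apply is_derive_mu; lra | apply is_derive_const].
  - apply continuity_mu_inv. lra.
Qed.

Lemma continuity_level_gap (u : R) : 0 < u < 1 -> continuity_pt level_gap u.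
Proof.
  intros Hu. destruct (level_shift_spec u Hu) as [Hv _].
  apply continuity_pt_minus; [| now apply continuity_phi].
  apply (continuity_pt_comp level_shift (phi al2 be)); [now apply continuity_level_shift |].
  apply continuity_phi. lra.
Qed.

(* At a zero [z] the ratio [rho] drops from [z] to [level_shift z]; a level [lam] between the
   two values bounds the [phi]-increments on both sides against the common [mu]-increment. *)
Lemma level_gap_upcrossing (z : R) : 0 < z < 1 -> level_gap z = 0 ->
  exists eps, 0 < eps /\ forall x, Rabs (x - z) < eps -> x <> z -> 0 < (x - z) * level_gap x.
Proof.
  intros Hz Gz.
  destruct (level_shift_spec z Hz) as [Hv0 Hmuv0].
  set (v0 := level_shift z) in *.
  assert (Hrho : rho al2 be v0 < rho al1 be z).
  { apply (rho_drop al1 al2 be z v0); try lra. unfold level_gap in Gz. fold v0 in Gz. lra. }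
  destruct (continuity_pt_separate (rho al1 be) (fun x => rho al2 be (level_shift x)) z)
    as (eps & lam & Heps & Hsep); [now apply continuity_rho | | exact Hrho |].
  { apply (continuity_pt_comp level_shift (rho al2 be)); [now apply continuity_level_shift |].
    apply continuity_rho. fold v0. lra. }
  exists (Rmin eps (Rmin z (1 - z))). split; [repeat apply Rmin_glb_lt; lra |].
  intros x Hx Hxz.
  pose proof (Rmin_l eps (Rmin z (1 - z))). pose proof (Rmin_r eps (Rmin z (1 - z))).
  pose proof (Rmin_l z (1 - z)). pose proof (Rmin_r z (1 - z)).
  destruct (Hsep x ltac:(lra)) as [Hlamx Hlamx'].
  destruct (Hsep z ltac:(rewrite Rminus_diag, Rabs_R0; lra)) as [Hlamz Hlamz']. fold v0 in Hlamz.
  apply Rabs_def2 in Hx.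
  destruct (level_shift_spec x ltac:(lra)) as [Hv Hmuv].
  unfold level_gap in *. fold v0 in Gz. set (v := level_shift x) in *.
  destruct (Rdichotomy x z Hxz) as [Hlt | Hgt].
  - assert (mu z < mu x) by (apply mu_decreasing; lra).
    assert (Hvv0 : v < v0) by (apply (mu_lt_iff v0 v); lra).
    pose proof (phi_sub_gt al1 be lam x z ltac:(lra) Hbe ltac:(lra) Hlt ltac:(lra) ltac:(lra)).
    pose proof (phi_sub_lt al2 be lam v v0 ltac:(lra) Hbe ltac:(lra) Hvv0 ltac:(lra) ltac:(lra)).
    assert (phi al2 be v - phi al1 be x < 0) by nra. nra.
  - assert (mu x < mu z) by (apply mu_decreasing; lra).
    assert (Hvv0 : v0 < v) by (apply (mu_lt_iff v v0); lra).
    pose proof (phi_sub_gt al1 be lam z x ltac:(lra) Hbe ltac:(lra) Hgt ltac:(lra) ltac:(lra)).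
    pose proof (phi_sub_lt al2 be lam v0 v ltac:(lra) Hbe ltac:(lra) Hvv0 ltac:(lra) ltac:(lra)).
    assert (0 < phi al2 be v - phi al1 be x) by nra. nra.
Qed.

Lemma level_gap_neg : exists u, 0 < u < 1 /\ level_gap u < 0.
Proof.
  destruct (mu_inv_spec (- C) ltac:(lra)) as [Hw0 Hmuw0].
  set (w0 := mu_inv (- C)) in *.
  assert (Hw0pos : 0 < w0) by (destruct (proj1 Hw0) as [H | E]; [exact H | rewrite <- E, mu_0 in Hmuw0; lra]).
  pose proof (kappa_pos w0 ltac:(lra)).
  set (m := al2 * kappa w0 / al1).
  assert (Hm : 0 < m) by (unfold m; apply Rdiv_lt_0_compat; nra).
  set (u := / (1 + m)).
  assert (Hu : 0 < u < 1) by now apply inv_succ_bounds.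
  assert (Hku : m <= kappa u).
  { pose proof (kappa_inv_succ_sq m Hm) as Hsq. fold u in Hsq. pose proof (kappa_pos u Hu). nra. }
  exists u. split; [exact Hu |].
  destruct (level_shift_spec u Hu) as [Hv Hmuv].
  unfold level_gap, phi. set (v := level_shift u) in *.
  assert (mu u < 0) by (rewrite <- mu_0; apply mu_decreasing; lra).
  assert (Hwv : w0 < v) by (apply (mu_lt_iff v w0); lra).
  pose proof (kappa_decreasing w0 v Hw0pos Hwv ltac:(lra)).
  pose proof (nu_decreasing u v ltac:(lra) ltac:(lra) ltac:(lra)).
  assert (al2 * kappa w0 <= al1 * kappa u).
  { replace (al2 * kappa w0) with (al1 * m) by (unfold m; field; lra). nra. }
  nra.
Qed.

Lemma kappa_lt_level_shift (lam u : R) : 0 < u < 1 -> 1 / u + d <= lam * (1 - d ^ 2) ->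
  kappa u < exp (lam * C) * kappa (level_shift u).
Proof.
  intros Hu Hlam. destruct (level_shift_spec u Hu) as [Hv Hmuv].
  pose proof (ln_kappa_sub_lt lam u (level_shift u) ltac:(lra) ltac:(lra) ltac:(lra) Hlam) as Hln.
  replace (mu u - mu (level_shift u)) with C in Hln by lra.
  pose proof (kappa_pos u Hu). pose proof (kappa_pos (level_shift u) ltac:(lra)).
  rewrite <- (exp_ln (kappa u)), <- (exp_ln (kappa (level_shift u))), <- exp_plus by lra.
  apply exp_increasing. lra.
Qed.

Lemma level_gap_gt (u : R) : 0 < u < 1 ->
  al2 * kappa (level_shift u) - al1 * kappa u - be * C / (1 - d ^ 2) * kappa u ^ 2 < level_gap u.
Proof.
  intros Hu. destruct (level_shift_spec u Hu) as [Hv Hmuv].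
  pose proof (nu_sub_lt_kappa_sq u (level_shift u) ltac:(lra) ltac:(lra) ltac:(lra)) as Hn.
  replace (mu u - mu (level_shift u)) with C in Hn by lra.
  unfold level_gap, phi.
  assert (be * (nu u - nu (level_shift u)) < be * (kappa u ^ 2 / (1 - d ^ 2) * C))
    by (apply Rmult_lt_compat_l; lra).
  replace (be * C / (1 - d ^ 2) * kappa u ^ 2) with (be * (kappa u ^ 2 / (1 - d ^ 2) * C))
    by (field; nra).
  lra.
Qed.

(* Near [u = 1] the [kappa]-terms dominate in [level_gap], and [kappa u / kappa (level_shift u)]
   tends to [exp (C / (1 - d))]. *)
Lemma level_gap_pos : C < (1 - d) * ln (al2 / al1) -> exists u, 0 < u < 1 /\ 0 < level_gap u.
Proof.
  intros Hlt. assert (Hd2 : 0 < 1 - d ^ 2) by nra.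
  set (gam := ln (al2 / al1) - C / (1 - d)).
  assert (Hgam : 0 < gam).
  { unfold gam. apply Rmult_lt_reg_l with (1 - d); [lra |].
    replace ((1 - d) * (ln (al2 / al1) - C / (1 - d))) with ((1 - d) * ln (al2 / al1) - C)
      by (field; lra).
    lra. }
  set (th := exp (- gam / 2)).
  assert (Hth : 0 < th < 1) by (split; [apply exp_pos | rewrite <- exp_0; apply exp_increasing; lra]).
  set (lam := 1 / (1 - d) + gam / (2 * C)).
  assert (Hexp : exp (lam * C) = al2 / al1 * th).
  { unfold th. rewrite <- (exp_ln (al2 / al1)) at 1 by (apply Rdiv_lt_0_compat; lra).
    rewrite <- exp_plus. f_equal. unfold lam, gam. field. lra. }
  set (k0 := al1 * (1 - th) * (1 - d ^ 2) / (be * C)).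
  assert (Hk0 : 0 < k0) by (unfold k0; apply Rdiv_lt_0_compat; [apply Rmult_lt_0_compat; [nra | lra] | nra]).
  set (g := gam * (1 - d ^ 2) / (2 * C)).
  assert (Hg : 0 < g) by (unfold g; apply Rdiv_lt_0_compat; [apply Rmult_lt_0_compat |]; lra).
  destruct (exists_kappa_le_near_one g k0 Hg Hk0) as (u & Hu & Hinvu & Hk).
  exists u. split; [exact Hu |].
  destruct (level_shift_spec u Hu) as [Hv _].
  pose proof (kappa_pos u Hu) as Hku. pose proof (kappa_pos (level_shift u) ltac:(lra)) as Hkv.
  assert (Hkappa : al1 * kappa u < th * (al2 * kappa (level_shift u))).
  { assert (Hlam : 1 / u + d <= lam * (1 - d ^ 2)).
    { replace (lam * (1 - d ^ 2)) with (1 + d + g) by (unfold lam, g; field; lra). lra. }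
    pose proof (kappa_lt_level_shift lam u Hu Hlam) as Hratio. rewrite Hexp in Hratio.
    apply Rmult_lt_reg_l with (/ al1); [now apply Rinv_0_lt_compat |].
    replace (/ al1 * (al1 * kappa u)) with (kappa u) by (field; lra).
    replace (/ al1 * (th * (al2 * kappa (level_shift u))))
      with (al2 / al1 * th * kappa (level_shift u)) by (field; lra).
    exact Hratio. }
  assert (Hquad : be * C / (1 - d ^ 2) * kappa u ^ 2 <= (1 - th) * (al1 * kappa u)).
  { replace ((1 - th) * (al1 * kappa u)) with (be * C / (1 - d ^ 2) * k0 * kappa u)
      by (unfold k0; field; repeat split; nra).
    replace (be * C / (1 - d ^ 2) * kappa u ^ 2)
      with (be * C / (1 - d ^ 2) * kappa u * kappa u) by ring.
    apply Rmult_le_compat_r; [lra |]. apply Rmult_le_compat_l; [| lra].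
    apply Rlt_le, Rdiv_lt_0_compat; nra. }
  pose proof (level_gap_gt u Hu).
  assert (0 <= al2 * kappa (level_shift u) * (1 - th) ^ 2) by (apply Rmult_le_pos; nra).
  nra.
Qed.

End LevelGap.

Lemma level_pair_exists (al1 al2 be C : R) : 0 < al1 -> 0 < al2 -> 0 < be ->
  0 < C < (1 - d) * ln (al2 / al1) -> exists a b, level_pair al1 al2 be C a b.
Proof.
  intros Hal1 Hal2 Hbe [HC HCl].
  destruct (level_gap_neg al1 al2 be C Hal1 Hal2 Hbe HC) as [u1 [Hu1 G1]].
  destruct (level_gap_pos al1 al2 be C Hal1 Hal2 Hbe HC HCl) as [u2 [Hu2 G2]].
  destruct (exists_root_between (level_gap al1 al2 be C) 0 1 u1 u2 Hu1 Hu2) as [z [Hz Gz]]; auto.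
  { intros t Ht. now apply continuity_level_gap. }
  destruct (level_shift_spec C HC z Hz) as [Hv Hmuv].
  exists z, (level_shift C z). unfold level_gap in Gz. repeat split; lra.
Qed.

Lemma level_pair_unique_pos (al1 al2 be C a1 b1 a2 b2 : R) : 0 < al1 -> 0 < al2 -> 0 < be -> 0 < C ->
  level_pair al1 al2 be C a1 b1 -> level_pair al1 al2 be C a2 b2 -> a1 = a2 /\ b1 = b2.
Proof.
  intros Hal1 Hal2 Hbe HC P1 P2.
  assert (Hzero : forall a b, level_pair al1 al2 be C a b ->
            level_shift C a = b /\ level_gap al1 al2 be C a = 0).
  { intros a b (Ha & Hb & Hmu & Hphi). assert (E : level_shift C a = b) by now apply level_shift_of_level.
    split; [exact E | unfold level_gap; rewrite E; lra]. }
  destruct (Hzero a1 b1 P1) as [E1 G1], (Hzero a2 b2 P2) as [E2 G2].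
  assert (Hsingle : forall x y, 0 < x -> x < y -> y < 1 ->
            level_gap al1 al2 be C x = 0 -> level_gap al1 al2 be C y = 0 -> False).
  { intros x y Hx Hxy Hy Gx Gy. apply (no_two_upcrossing_zeros (level_gap al1 al2 be C) x y Hxy); auto.
    - intros t Ht. apply continuity_level_gap; lra.
    - intros t Ht Gt. apply level_gap_upcrossing; auto; lra. }
  destruct P1 as (Ha1 & _), P2 as (Ha2 & _).
  destruct (Rtotal_order a1 a2) as [Hlt | [Heq | Hgt]].
  - exfalso. apply (Hsingle a1 a2); lra.
  - subst a2. split; [reflexivity | congruence].
  - exfalso. apply (Hsingle a2 a1); lra.
Qed.

Lemma level_pair_unique (al1 al2 be C a1 b1 a2 b2 : R) : 0 < al1 -> 0 < al2 -> 0 < be -> C <> 0 ->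
  level_pair al1 al2 be C a1 b1 -> level_pair al1 al2 be C a2 b2 -> a1 = a2 /\ b1 = b2.
Proof.
  intros Hal1 Hal2 Hbe HC P1 P2. destruct (Rdichotomy C 0 HC) as [Hneg | Hpos].
  - enough (b1 = b2 /\ a1 = a2) by tauto.
    apply (level_pair_unique_pos al2 al1 be (- C)); auto using level_pair_swap; lra.
  - now apply (level_pair_unique_pos al1 al2 be C).
Qed.
End Profiles.

Lemma exists_level_pair_iff (d al1 al2 be C : R) : -1 < d < 1 -> 0 < al1 -> 0 < al2 -> 0 < be ->
  (exists a b, level_pair d al1 al2 be C a b) <->
  0 < C < (1 - d) * ln (al2 / al1) \/ 0 < - C < (1 - d) * ln (al1 / al2) \/ (C = 0 /\ al1 = al2).
Proof.
  intros Hd Hal1 Hal2 Hbe. split.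
  - intros (a & b & P). destruct (Rtotal_order a b) as [Hab | [<- | Hba]].
    + left. now apply (level_pair_lt d Hd al1 al2 be C a b).
    + right; right. destruct (level_pair_same d al1 al2 be C a P). tauto.
    + right; left. apply (level_pair_lt d Hd al2 al1 be (- C) b a); auto using level_pair_swap.
  - intros [HC | [HC | [-> <-]]].
    + now apply level_pair_exists.
    + destruct (level_pair_exists d Hd al2 al1 be (- C)) as (b & a & P); auto.
      exists a, b. apply level_pair_swap in P. now rewrite Ropp_involutive in P.
    + exists (1 / 2), (1 / 2). repeat split; lra.
Qed.

(** * Reversal permanent charges *)

Lemma PNP_B_eq (l r alpha beta A : R) : 0 < alpha -> beta < 1 ->
  PNP_B l r alpha beta A = (1 - beta) / alpha * (PNP_AM l r alpha beta - A).
Proof. intros. unfold PNP_B, PNP_AM. field. lra. Qed.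

Lemma sqrt_kappa_param (Q a : R) : 0 < Q -> 0 < a < 1 -> sqrt (Q ^ 2 + (Q * kappa a) ^ 2) = Q / a.
Proof.
  intros HQ Ha. apply sqrt_lem_1; [nra | apply Rlt_le, Rdiv_lt_0_compat; lra |].
  rewrite Rpow_mult_distr, kappa_sq by lra. field. lra.
Qed.

Lemma kappa_param (Q A : R) : 0 < Q -> 0 < A ->
  0 < Q / sqrt (Q ^ 2 + A ^ 2) < 1 /\ A = Q * kappa (Q / sqrt (Q ^ 2 + A ^ 2)).
Proof.
  intros HQ HA.
  set (S := sqrt (Q ^ 2 + A ^ 2)).
  assert (HS2 : S ^ 2 = Q ^ 2 + A ^ 2) by (apply pow2_sqrt; nra).
  assert (HS : 0 < S) by (apply sqrt_lt_R0; nra).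
  assert (Ha : 0 < Q / S < 1).
  { split; [apply Rdiv_lt_0_compat; lra |]. apply Rmult_lt_reg_r with S; [lra |]. field_simplify; nra. }
  split; [exact Ha |].
  unfold kappa. replace (1 - (Q / S) ^ 2) with ((A / S) ^ 2).
  2:{ unfold Rdiv. rewrite !Rpow_mult_distr, pow_inv, HS2. field. nra. }
  rewrite sqrt_pow2 by (apply Rlt_le, Rdiv_lt_0_compat; lra). field. lra.
Qed.

Lemma ln_scaled_div (Q x y : R) : 0 < Q -> 0 < x -> 0 < y -> ln (Q * x / (Q * y)) = ln x - ln y.
Proof. intros. replace (Q * x / (Q * y)) with (x / y) by (field; lra). now apply ln_div. Qed.

Section Parametrization.

Variables l r alpha beta d Q A a b : R.
Hypotheses (HQ : 0 < Q) (Hd : -1 < d < 1) (Ha : 0 < a < 1) (Hb : 0 < b < 1)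
  (HA : A = Q * kappa a) (HB : PNP_B l r alpha beta A = Q * kappa b).

Lemma PNP_Sa_param : PNP_Sa Q A = Q / a.
Proof. unfold PNP_Sa. rewrite HA. now apply sqrt_kappa_param. Qed.

Lemma PNP_Sb_param : PNP_Sb l r alpha beta Q A = Q / b.
Proof. unfold PNP_Sb. rewrite HB. now apply sqrt_kappa_param. Qed.

Lemma ln_Sa_Sb_ratio_param :
  ln ((Q / a + d * Q) / (Q / b + d * Q)) = ln ((1 + d * a) / a) - ln ((1 + d * b) / b).
Proof.
  replace (Q / a + d * Q) with (Q * ((1 + d * a) / a)) by (field; lra).
  replace (Q / b + d * Q) with (Q * ((1 + d * b) / b)) by (field; lra).
  apply ln_scaled_div; [lra | apply Rdiv_lt_0_compat; nra | apply Rdiv_lt_0_compat; nra].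
Qed.

Lemma PNP_G1_param : 0 < l -> 0 < r ->
  PNP_G1 l r alpha beta Q A d = d * ln (l / r) + mu d a - mu d b.
Proof.
  intros Hl Hr. unfold PNP_G1. rewrite PNP_Sa_param, PNP_Sb_param, ln_Sa_Sb_ratio_param, HB, HA.
  pose proof (kappa_pos a Ha). pose proof (kappa_pos b Hb).
  rewrite ln_scaled_div by lra.
  replace (Q / a - Q) with (Q * ((1 - a) / a)) by (field; lra).
  replace (Q / b - Q) with (Q * ((1 - b) / b)) by (field; lra).
  rewrite ln_scaled_div by (try apply Rdiv_lt_0_compat; lra).
  rewrite !ln_kappa, !ln_div by nra. unfold mu. field.
Qed.

Lemma PNP_G2_param : PNP_G2 l r alpha beta Q A d = l - A - Q * (nu d a - nu d b).
Proof.
  unfold PNP_G2, PNP_N. rewrite PNP_Sa_param, PNP_Sb_param, ln_Sa_Sb_ratio_param.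
  unfold nu. rewrite !ln_div by nra. field. lra.
Qed.

End Parametrization.

Section ReversalCharge.

Variables l r alpha beta : R.
Hypotheses (Hl : 0 < l) (Hr : 0 < r) (Halpha : 0 < alpha) (Hbeta : beta < 1).

Lemma PNP_B_pos_iff (A : R) : 0 < PNP_B l r alpha beta A <-> A < PNP_AM l r alpha beta.
Proof.
  rewrite PNP_B_eq by lra.
  assert (0 < (1 - beta) / alpha) by (apply Rdiv_lt_0_compat; lra).
  split; intros; nra.
Qed.

Lemma reversal_charge_pos_iff (d V Q : R) : -1 < d < 1 -> 0 < Q ->
  reversal_charge l r alpha beta d V Q <->
  exists a b, level_pair d r l ((1 - beta) / alpha * l + r) (V - d * ln (l / r)) a b /\
    l = Q * (kappa a + (nu d a - nu d b)).
Proof.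
  intros Hd HQ. set (k := (1 - beta) / alpha). split.
  - intros (A & HA & HAM & HG1 & HG2).
    assert (HB : 0 < PNP_B l r alpha beta A) by now apply PNP_B_pos_iff.
    destruct (kappa_param Q A HQ HA) as [Ha HAa].
    destruct (kappa_param Q _ HQ HB) as [Hb HBb].
    set (a := Q / sqrt (Q ^ 2 + A ^ 2)) in *.
    set (b := Q / sqrt (Q ^ 2 + PNP_B l r alpha beta A ^ 2)) in *.
    rewrite (PNP_G1_param l r alpha beta d Q A a b) in HG1 by auto.
    rewrite (PNP_G2_param l r alpha beta d Q A a b) in HG2 by auto.
    assert (El : l = Q * (kappa a + (nu d a - nu d b))) by (rewrite HAa in HG2; lra).
    assert (Er : r = Q * (kappa b - k * (nu d a - nu d b))).
    { unfold PNP_B in HBb. fold k in HBb.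
      transitivity (Q * kappa b - k * (l - A)); [lra | rewrite El, HAa; ring]. }
    exists a, b. split; [| exact El].
    repeat split; try lra. unfold phi. rewrite Er, El. ring.
  - intros (a & b & (Ha & Hb & Hmu & Hphi) & El). unfold phi in Hphi. fold k in Hphi.
    pose proof (kappa_pos a Ha). pose proof (kappa_pos b Hb).
    assert (Hpos : 0 < kappa a + (nu d a - nu d b)) by nra.
    assert (Er : r = Q * (kappa b - k * (nu d a - nu d b))).
    { apply Rmult_eq_reg_l with (kappa a + (nu d a - nu d b)); [| lra].
      transitivity (l * (kappa b - k * (nu d a - nu d b))); [lra |]. rewrite El. ring. }
    assert (HB : PNP_B l r alpha beta (Q * kappa a) = Q * kappa b).
    { unfold PNP_B. fold k. rewrite Er, El. ring. }
    exists (Q * kappa a). split; [nra |]. split.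
    { apply PNP_B_pos_iff. rewrite HB. nra. }
    rewrite (PNP_G1_param l r alpha beta d Q _ a b), (PNP_G2_param l r alpha beta d Q _ a b) by auto.
    split; lra.
Qed.

Lemma exists_pos_reversal_charge_iff (d V : R) : -1 < d < 1 ->
  (exists Q, 0 < Q /\ reversal_charge l r alpha beta d V Q) <->
  0 < (V - d * ln (l / r)) * (ln (l / r) - V) \/ (l = r /\ V = 0).
Proof.
  intros Hd. set (k := (1 - beta) / alpha). set (L := ln (l / r)).
  assert (Hk : 0 < k) by (apply Rdiv_lt_0_compat; lra).
  assert (Hbe : 0 < k * l + r) by nra.
  assert (HLrl : ln (r / l) = - L) by (unfold L; rewrite !ln_div by lra; ring).
  transitivity (exists a b, level_pair d r l (k * l + r) (V - d * L) a b).
  - split.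
    + intros (Q & HQ & HRC). apply reversal_charge_pos_iff in HRC; [| lra | lra].
      destruct HRC as (a & b & P & _). now exists a, b.
    + intros (a & b & P).
      assert (Hpos : 0 < kappa a + (nu d a - nu d b)).
      { destruct P as (Ha & Hb & _ & Hphi). unfold phi in Hphi.
        pose proof (kappa_pos a Ha). pose proof (kappa_pos b Hb).
        assert ((k * l + r) * (kappa a + (nu d a - nu d b)) = k * l * kappa a + l * kappa b) by lra.
        assert (0 < k * l * kappa a + l * kappa b) by (pose proof (Rmult_lt_0_compat k l Hk Hl); nra).
        nra. }
      exists (l / (kappa a + (nu d a - nu d b))). split; [now apply Rdiv_lt_0_compat |].
      apply reversal_charge_pos_iff; [lra | now apply Rdiv_lt_0_compat |].
      exists a, b. split; [exact P | field; lra].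
  - rewrite exists_level_pair_iff by lra. fold L. rewrite HLrl.
    assert (HL0 : l = r -> L = 0) by (intros ->; unfold L; rewrite Rdiv_diag by lra; apply ln_1).
    split.
    + intros [H | [H | [H E]]]; [left; nra | left; nra | right; split; [congruence |]].
      rewrite HL0 in H by congruence. lra.
    + intros [H | [-> ->]].
      * assert (V - d * L <> 0) by (intro E; rewrite E in H; lra).
        destruct (Rlt_le_dec 0 (V - d * L)) as [Hc | Hc]; [left; split; nra | right; left; split; nra].
      * right; right. rewrite HL0 by reflexivity. split; lra.
Qed.

Lemma pos_reversal_charge_unique (d V Q1 Q2 : R) : -1 < d < 1 -> l <> r -> 0 < Q1 -> 0 < Q2 ->
  reversal_charge l r alpha beta d V Q1 -> reversal_charge l r alpha beta d V Q2 -> Q1 = Q2.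
Proof.
  intros Hd Hlr HQ1 HQ2 R1 R2.
  apply reversal_charge_pos_iff in R1, R2; auto.
  destruct R1 as (a1 & b1 & P1 & El1), R2 as (a2 & b2 & P2 & El2).
  assert (Hbe : 0 < (1 - beta) / alpha * l + r).
  { pose proof (Rdiv_lt_0_compat (1 - beta) alpha ltac:(lra) Halpha). nra. }
  assert (HC : V - d * ln (l / r) <> 0).
  { intros HC. rewrite HC in P1.
    destruct (proj1 (exists_level_pair_iff d r l _ 0 Hd Hr Hl Hbe) (ex_intro _ a1 (ex_intro _ b1 P1)))
      as [H | [H | [_ E]]]; lra || congruence. }
  destruct (level_pair_unique d Hd r l _ _ a1 b1 a2 b2 Hr Hl Hbe HC P1 P2) as [<- <-].
  pose proof (kappa_pos a1 (proj1 P1)).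
  assert (0 < kappa a1 + (nu d a1 - nu d b1)) by nra.
  apply Rmult_eq_reg_r with (kappa a1 + (nu d a1 - nu d b1)); lra.
Qed.

Lemma reversal_charge_zero_iff (d V : R) :
  reversal_charge l r alpha beta d V 0 <-> V = d * ln (l / r).
Proof.
  assert (HQ0 : forall A, 0 < A -> 0 < PNP_B l r alpha beta A ->
            PNP_Sa 0 A = A /\ PNP_Sb l r alpha beta 0 A = PNP_B l r alpha beta A).
  { intros A HA HB. unfold PNP_Sa, PNP_Sb. rewrite !pow_i, !Rplus_0_l by lia.
    split; now apply sqrt_pow2, Rlt_le. }
  split.
  - intros (A & HA & HAM & HG1 & _).
    apply PNP_B_pos_iff in HAM. destruct (HQ0 A HA HAM) as [ESa ESb].
    unfold PNP_G1 in HG1. rewrite ESa, ESb, !Rmult_0_r, !Rplus_0_r, !Rminus_0_r in HG1. lra.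
  - intros HV. set (k := (1 - beta) / alpha).
    assert (Hk : 0 < k) by (apply Rdiv_lt_0_compat; lra).
    (* the root of [PNP_G2 0 A = 2 A - l - PNP_B A], which is linear in [A] *)
    set (A0 := ((1 + k) * l + r) / (2 + k)).
    assert (HA0 : 0 < A0) by (apply Rdiv_lt_0_compat; nra).
    assert (EB : PNP_B l r alpha beta A0 = (k * l + 2 * r) / (2 + k))
      by (unfold PNP_B, A0; fold k; field; lra).
    assert (HB : 0 < PNP_B l r alpha beta A0) by (rewrite EB; apply Rdiv_lt_0_compat; nra).
    destruct (HQ0 A0 HA0 HB) as [ESa ESb].
    exists A0. split; [exact HA0 |]. split; [now apply PNP_B_pos_iff |].
    unfold PNP_G1, PNP_G2, PNP_N. rewrite ESa, ESb, !Rmult_0_r, !Rplus_0_r, !Rminus_0_r, EB.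
    split; [lra |]. unfold A0. field. lra.
Qed.

Lemma reversal_charge_opp (d V Q : R) :
  reversal_charge l r alpha beta d V Q -> reversal_charge l r alpha beta (- d) (- V) (- Q).
Proof.
  intros (A & HA & HAM & HG1 & HG2).
  assert (HB : 0 < PNP_B l r alpha beta A) by now apply PNP_B_pos_iff.
  exists A. split; [exact HA |]. split; [exact HAM |].
  unfold PNP_G1, PNP_G2, PNP_N, PNP_Sb, PNP_Sa in *.
  replace ((- Q) ^ 2) with (Q ^ 2) by ring. replace (- d * - Q) with (d * Q) by ring.
  set (B := PNP_B l r alpha beta A) in *.
  set (Sa := sqrt (Q ^ 2 + A ^ 2)) in *. set (Sb := sqrt (Q ^ 2 + B ^ 2)) in *.
  (* Negating [Q] swaps [S - Q] and [S + Q], whose logarithms sum to [2 ln X]. *)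
  assert (Hconj : forall X, 0 < X -> let S := sqrt (Q ^ 2 + X ^ 2) in
            0 < S - Q /\ 0 < S + Q /\ ln (S - Q) + ln (S + Q) = 2 * ln X).
  { intros X HX S. assert (HS2 : S ^ 2 = Q ^ 2 + X ^ 2) by (apply pow2_sqrt; nra).
    assert (0 <= S) by apply sqrt_pos.
    assert (0 < S - Q /\ 0 < S + Q) as [Hm Hp] by (split; nra).
    split; [exact Hm |]. split; [exact Hp |].
    rewrite <- ln_mult by lra. replace ((S - Q) * (S + Q)) with (X * X) by nra.
    rewrite ln_mult by lra. ring. }
  destruct (Hconj A HA) as (Ha1 & Ha2 & La), (Hconj B HB) as (Hb1 & Hb2 & Lb).
  fold Sa Sb in Ha1, Ha2, La, Hb1, Hb2, Lb.
  replace (Sa - - Q) with (Sa + Q) by ring. replace (Sb - - Q) with (Sb + Q) by ring.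
  rewrite (ln_div A B), (ln_div (Sa + Q) (Sb + Q)) by lra.
  rewrite (ln_div A B), (ln_div (Sa - Q) (Sb - Q)) in HG1 by lra.
  split; lra.
Qed.

Lemma reversal_charge_balanced (d Q : R) : -1 < d < 1 -> l = r -> reversal_charge l r alpha beta d 0 Q.
Proof.
  intros Hd Hlr.
  assert (EB : PNP_B l r alpha beta l = r) by (unfold PNP_B; ring).
  exists l. split; [exact Hl |]. split; [apply PNP_B_pos_iff; rewrite EB; exact Hr |].
  unfold PNP_G1, PNP_G2, PNP_N, PNP_Sb, PNP_Sa. rewrite EB, <- Hlr.
  set (S := sqrt (Q ^ 2 + l ^ 2)).
  assert (HS2 : S ^ 2 = Q ^ 2 + l ^ 2) by (apply pow2_sqrt; nra).
  assert (0 <= S) by apply sqrt_pos.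
  assert (Q < S /\ - Q < S) as [HSQ HSQ'] by (split; nra).
  assert (0 < S + d * Q) by (destruct (Rle_lt_dec 0 Q); nra).
  rewrite !Rdiv_diag by nra. rewrite ln_1. split; ring.
Qed.

Lemma reversal_charge_opp_iff (d V Q : R) :
  reversal_charge l r alpha beta (- d) (- V) (- Q) <-> reversal_charge l r alpha beta d V Q.
Proof.
  split; [| apply reversal_charge_opp].
  intros H. apply reversal_charge_opp in H. now rewrite !Ropp_involutive in H.
Qed.

Lemma exists_neg_reversal_charge_iff (d V : R) : -1 < d < 1 ->
  (exists Q, Q < 0 /\ reversal_charge l r alpha beta d V Q) <->
  0 < (V - d * ln (l / r)) * (- ln (l / r) - V) \/ (l = r /\ V = 0).
Proof.
  intros Hd. transitivity (exists Q, 0 < Q /\ reversal_charge l r alpha beta (- d) (- V) Q).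
  - split; intros (Q & HQ & HRC); exists (- Q); split; try lra.
    + now apply reversal_charge_opp_iff in HRC.
    + apply reversal_charge_opp_iff. now rewrite Ropp_involutive.
  - rewrite exists_pos_reversal_charge_iff by lra.
    replace ((- V - - d * ln (l / r)) * (ln (l / r) - - V))
      with ((V - d * ln (l / r)) * (- ln (l / r) - V)) by ring.
    split; intros [H | [E HV]]; auto; right; split; lra.
Qed.

Lemma neg_reversal_charge_unique (d V Q1 Q2 : R) : -1 < d < 1 -> l <> r -> Q1 < 0 -> Q2 < 0 ->
  reversal_charge l r alpha beta d V Q1 -> reversal_charge l r alpha beta d V Q2 -> Q1 = Q2.
Proof.
  intros Hd Hlr HQ1 HQ2 R1 R2.
  apply reversal_charge_opp_iff in R1, R2.
  enough (- Q1 = - Q2) by lra.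
  apply (pos_reversal_charge_unique (- d) (- V)); auto; lra.
Qed.

Lemma reversal_charge_balanced_iff (d V Q : R) : -1 < d < 1 -> l = r ->
  reversal_charge l r alpha beta d V Q <-> V = 0.
Proof.
  intros Hd Hlr. split; [| intros ->; now apply reversal_charge_balanced].
  assert (HL : ln (l / r) = 0) by (rewrite Hlr, Rdiv_diag by lra; apply ln_1).
  intros HRC. destruct (Rtotal_order 0 Q) as [HQ | [<- | HQ]].
  - destruct (proj1 (exists_pos_reversal_charge_iff d V Hd) (ex_intro _ Q (conj HQ HRC))) as [H | [_ H]];
      [rewrite HL in H; nra | exact H].
  - apply reversal_charge_zero_iff in HRC. rewrite HRC, HL. ring.
  - destruct (proj1 (exists_neg_reversal_charge_iff d V Hd) (ex_intro _ Q (conj HQ HRC))) as [H | [_ H]];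
      [rewrite HL in H; nra | exact H].
Qed.

End ReversalCharge.

Lemma ex_unique_by_sign (P : R -> Prop) (sp s0 sn : Prop) :
  ((exists Q, 0 < Q /\ P Q) <-> sp) -> (forall Q1 Q2, 0 < Q1 -> 0 < Q2 -> P Q1 -> P Q2 -> Q1 = Q2) ->
  (P 0 <-> s0) ->
  ((exists Q, Q < 0 /\ P Q) <-> sn) -> (forall Q1 Q2, Q1 < 0 -> Q2 < 0 -> P Q1 -> P Q2 -> Q1 = Q2) ->
  ~ (sp /\ s0) -> ~ (sp /\ sn) -> ~ (s0 /\ sn) ->
  (exists! Q, P Q) <-> sp \/ s0 \/ sn.
Proof.
  intros Hp Up H0 Hn Un D1 D2 D3.
  assert (Hsign : forall Q, P Q -> (0 < Q /\ sp) \/ (Q = 0 /\ s0) \/ (Q < 0 /\ sn)).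
  { intros Q HQ. destruct (Rtotal_order 0 Q) as [Hlt | [<- | Hgt]].
    - left. split; [exact Hlt | apply Hp; now exists Q].
    - right; left. split; [reflexivity | now apply H0].
    - right; right. split; [exact Hgt | apply Hn; now exists Q]. }
  split.
  - intros (Q & HQ & _). destruct (Hsign Q HQ) as [[_ H] | [[_ H] | [_ H]]]; tauto.
  - intros [H | [H | H]].
    + destruct (proj2 Hp H) as (Q & HQ & PQ). exists Q. split; [exact PQ |].
      intros Q' PQ'. destruct (Hsign Q' PQ') as [[HQ' _] | [[_ H'] | [_ H']]]; [now apply Up | tauto | tauto].
    + exists 0. split; [now apply H0 |].
      intros Q' PQ'. destruct (Hsign Q' PQ') as [[_ H'] | [[<- _] | [_ H']]]; [tauto | reflexivity | tauto].
    + destruct (proj2 Hn H) as (Q & HQ & PQ). exists Q. split; [exact PQ |].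
      intros Q' PQ'. destruct (Hsign Q' PQ') as [[_ H'] | [[_ H'] | [HQ' _]]]; [tauto | tauto | now apply Un].
Qed.

(* As [|d L| < |L|], the interval [(-|L|, |L|)] splits at [d L] into the part towards [L],
   the point [d L] and the part towards [- L]. *)
Lemma abs_lt_iff_regions (d L V : R) : -1 < d < 1 -> L <> 0 ->
  (Rabs V < Rabs L <->
   0 < (V - d * L) * (L - V) \/ V = d * L \/ 0 < (V - d * L) * (- L - V)) /\
  ~ (0 < (V - d * L) * (L - V) /\ 0 < (V - d * L) * (- L - V)).
Proof.
  intros Hd HL.
  assert (L < 0 \/ 0 < L) as [HLs | HLs] by lra;
  unfold Rabs; destruct (Rcase_abs V), (Rcase_abs L); try lra;
  destruct (Rtotal_order V (d * L)) as [HV | [HV | HV]];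
  repeat split; intros; nra.
Qed.

Lemma reversal_charge_unique_iff (l r alpha beta d V : R) :
  0 < l -> 0 < r -> 0 < alpha -> beta < 1 -> -1 < d < 1 ->
  (exists! Q, reversal_charge l r alpha beta d V Q) <-> Rabs V < Rabs (ln (l / r)).
Proof.
  intros Hl Hr Halpha Hbeta Hd.
  destruct (Req_dec l r) as [Hlr | Hlr].
  - assert (HL : ln (l / r) = 0) by (rewrite Hlr, Rdiv_diag by lra; apply ln_1).
    rewrite HL, Rabs_R0. split; [| pose proof (Rabs_pos V); lra].
    intros (Q & HQ & Huniq).
    assert (HV : V = 0) by now apply (reversal_charge_balanced_iff l r alpha beta Hl Hr Halpha Hbeta d V Q).
    assert (E0 := Huniq 0). assert (E1 := Huniq 1).
    rewrite (reversal_charge_balanced_iff l r alpha beta Hl Hr Halpha Hbeta) in E0, E1 by auto.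
    specialize (E0 HV). specialize (E1 HV). lra.
  - assert (HL : ln (l / r) <> 0).
    { intros HL. apply Hlr. rewrite <- ln_1 in HL.
      apply ln_inv in HL; [| apply Rdiv_lt_0_compat; lra | lra].
      apply (Rmult_eq_reg_r (/ r)); [| apply Rinv_neq_0_compat; lra].
      rewrite Rinv_r by lra. exact HL. }
    destruct (abs_lt_iff_regions d _ V Hd HL) as [-> Hdisj].
    apply ex_unique_by_sign.
    + rewrite exists_pos_reversal_charge_iff by auto. intuition.
    + intros. now apply (pos_reversal_charge_unique l r alpha beta Hl Hr Halpha Hbeta d V).
    + now apply reversal_charge_zero_iff.
    + rewrite exists_neg_reversal_charge_iff by auto. intuition.
    + intros. now apply (neg_reversal_charge_unique l r alpha beta Hl Hr Halpha Hbeta d V).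
    + intros [H HV]. rewrite HV in H. lra.
    + exact Hdisj.
    + intros [HV H]. rewrite HV in H. lra.
Qed.

Theorem theorem3p13 (l r alpha beta D1 D2 V : R)
  (hl : 0 < l) (hr : 0 < r)
  (ha : 0 < alpha) (hab : alpha < beta) (hb : beta < 1)
  (hD1 : 0 < D1) (hD2 : 0 < D2) :
  (exists! Q0 : R,
      reversal_charge l r alpha beta ((D2 - D1) / (D2 + D1)) V Q0)
  <-> Rabs V < Rabs (ln (l / r)).
Proof.
  apply reversal_charge_unique_iff; auto.
  split; apply Rmult_lt_reg_r with (D2 + D1); try lra; field_simplify; lra.
Qed.
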